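(* Let $\mathbb{M}^3$ be Minkowski 3-space with inner product $\langle x,y\rangle_{\mathbb{L}}=-x_1y_1+x_2y_2+x_3y_3$. Let $\sigma=\sigma(u,v)$ be a smooth surface in $\mathbb{M}^3$ and let $\{t,n,b\}$ be smooth vector fields along $\sigma$ with $\langle t,t\rangle_{\mathbb{L}}=1$, $\langle n,n\rangle_{\mathbb{L}}=-1$, $\langle b,b\rangle_{\mathbb{L}}=1$, pairwise orthogonal, such that $\sigma_u=t$, $\sigma_v=\lambda b$ for a nowhere-vanishing function $\lambda$, and $$t_u=-\kappa n,\qquad n_u=-\kappa t-\tau b,\qquad b_u=-\tau n$$ for functions $\kappa,\tau$ (so each $u$-curve is a unit-speed spacelike curve with timelike principal normal $n$, curvature $\kappa$ and torsion $\tau$, and is a geodesic of $\sigma$). Assume there are constants $A,B$, not both zero, with $A\kappa+B\tau=1$, and that $\tau$ vanishes nowhere. Define $$\sigma^*(u,v)=\sigma(u,v)+A\,n(u,v),\qquad t^*=\frac{Bt-Ab}{\sqrt{A^2+B^2}},\qquad b^*=\frac{At+Bb}{\sqrt{A^2+B^2}},$$ and along each $u$-curve let $u^*$ be a parameter with $du^*/du=\sqrt{A^2+B^2}\,\tau$. Then: (1) $\sigma^*_u=\tau(Bt-Ab)$, so $t^*=\partial\sigma^*/\partial u^*$ is a unit spacelike vector, and $n$ is orthogonal to both $\sigma^*_u$ and $\sigma^*_v$; (2) $\|\sigma-\sigma^*\|=\sqrt{|\langle \sigma-\sigma^*,\sigma-\sigma^*\rangle_{\mathbb{L}}|}$ is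 constant, $\langle\sigma^*-\sigma,b\rangle_{\mathbb{L}}=0$, $\langle\sigma^*-\sigma,b^*\rangle_{\mathbb{L}}=0$, and $\langle b,b^*\rangle_{\mathbb{L}}=B/\sqrt{A^2+B^2}$ is constant; (3) $\partial t^*/\partial u^*=-\kappa^* n$ and $\partial b^*/\partial u^*=-\tau^* n$, where $$\kappa^*=\frac{B\kappa-A\tau}{(A^2+B^2)\tau},\qquad \tau^*=\frac{1}{(A^2+B^2)\tau}.$$
   Context: A vector $x\in\mathbb{M}^3$ is spacelike if $\langle x,x\rangle_{\mathbb{L}}>0$ or $x=0$, timelike if $\langle x,x\rangle_{\mathbb{L}}<0$. A surface of this type (spanned by a one-parameter family of geodesic Bertrand curves with constants $A,B$, $A\kappa+B\tau=1$) is called a Razzaboni surface, and the map $\sigma\mapsto\sigma^*$ satisfying properties (2) is called a Razzaboni transformation, $\sigma^*$ the dual Razzaboni surface. *)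

From Stdlib Require Import Reals.
From Coquelicot Require Import Coquelicot.
Open Scope R_scope.

Record V3 := mkV3 { c1 : R; c2 : R; c3 : R }.

Definition vadd (x y : V3) : V3 := mkV3 (c1 x + c1 y) (c2 x + c2 y) (c3 x + c3 y).
Definition vscal (a : R) (x : V3) : V3 := mkV3 (a * c1 x) (a * c2 x) (a * c3 x).
Definition vsub (x y : V3) : V3 := vadd x (vscal (-1) y).

Definition lor (x y : V3) : R := - c1 x * c1 y + c2 x * c2 y + c3 x * c3 y.

Definition vderive (c : R -> V3) (x : R) (d : V3) : Prop :=
  is_derive (fun s => c1 (c s)) x (c1 d) /\
  is_derive (fun s => c2 (c s)) x (c2 d) /\
  is_derive (fun s => c3 (c s)) x (c3 d).

Definition du (f : R -> R -> V3) (u v : R) (d : V3) : Prop :=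
  vderive (fun s => f s v) u d.
Definition dv (f : R -> R -> V3) (u v : R) (d : V3) : Prop :=
  vderive (fun s => f u s) v d.

(* The mate curve sigma* = sigma + A n moves in the direction
   t + A n_u = (1 - A kappa) t - A tau b = tau (B t - A b), using A kappa + B tau = 1.
   Everything else is bookkeeping in the orthonormal Lorentz frame {t, n, b}: the
   offset A n has constant length |A| and is orthogonal to b and to b*, the new tangent
   t* and binormal b* are constant combinations of t and b, so their u-derivatives are
   multiples of n, and the chain rule with du/du* = 1 / (sqrt (A^2 + B^2) tau) rescales
   them to the stated curvature and torsion. *)
From Pilot Require Import Defs.
From Stdlib Require Import Reals Lra.
From Coquelicot Require Import Coquelicot.
Open Scope R_scope.

Lemma V3_eq x y : Defs.c1 x = Defs.c1 y -> c2 x = c2 y -> c3 x = c3 y -> x = y.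
Proof. destruct x, y; simpl; intros -> -> ->; reflexivity. Qed.

Lemma vscal_vscal a b x : vscal a (vscal b x) = vscal (a * b) x.
Proof. apply V3_eq; simpl; ring. Qed.

Lemma vscal_ext a b x : a = b -> vscal a x = vscal b x.
Proof. intros ->; reflexivity. Qed.

Lemma vsub_vaddl x y : vsub (vadd x y) x = y.
Proof. apply V3_eq; simpl; ring. Qed.

Lemma vsub_vaddr x y : vsub x (vadd x y) = vscal (-1) y.
Proof. apply V3_eq; simpl; ring. Qed.

Lemma lor_comm x y : lor x y = lor y x.
Proof. unfold lor; ring. Qed.

Lemma lor_vaddl x y z : lor (vadd x y) z = lor x z + lor y z.
Proof. unfold lor; simpl; ring. Qed.

Lemma lor_vaddr x y z : lor z (vadd x y) = lor z x + lor z y.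
Proof. unfold lor; simpl; ring. Qed.

Lemma lor_vscall a x z : lor (vscal a x) z = a * lor x z.
Proof. unfold lor; simpl; ring. Qed.

Lemma lor_vscalr a x z : lor z (vscal a x) = a * lor z x.
Proof. unfold lor; simpl; ring. Qed.

Definition lorentz_frame (t n b : V3) : Prop :=
  lor t t = 1 /\ lor n n = -1 /\ lor b b = 1 /\
  lor t n = 0 /\ lor t b = 0 /\ lor n b = 0.

Definition frame_comb (p q : R) (t b : V3) : V3 := vadd (vscal p t) (vscal q b).

Section FrameCombination.

Variables (t n b : V3) (p q : R).
Hypothesis frame : lorentz_frame t n b.

Lemma lor_frame_comb_self : lor (frame_comb p q t b) (frame_comb p q t b) = p ^ 2 + q ^ 2.
Proof.
  destruct frame as (Ht & _ & Hb & _ & Htb & _).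
  unfold frame_comb; rewrite !lor_vaddl, !lor_vaddr, !lor_vscall, !lor_vscalr.
  rewrite (lor_comm b t), Ht, Hb, Htb; ring.
Qed.

Lemma lor_normalized_frame_comb (s : R) : s * s = p ^ 2 + q ^ 2 -> s <> 0 ->
  lor (vscal (/ s) (frame_comb p q t b)) (vscal (/ s) (frame_comb p q t b)) = 1.
Proof.
  intros Hs Hs0; rewrite lor_vscall, lor_vscalr, lor_frame_comb_self, <- Hs; field; exact Hs0.
Qed.

Lemma lor_normal_frame_comb : lor n (frame_comb p q t b) = 0.
Proof.
  destruct frame as (_ & _ & _ & Htn & _ & Hnb).
  unfold frame_comb; rewrite lor_vaddr, !lor_vscalr, (lor_comm n t), Htn, Hnb; ring.
Qed.

Lemma lor_binormal_frame_comb : lor b (frame_comb p q t b) = q.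
Proof.
  destruct frame as (_ & _ & Hb & _ & Htb & _).
  unfold frame_comb; rewrite lor_vaddr, !lor_vscalr, (lor_comm b t), Htb, Hb; ring.
Qed.

End FrameCombination.

Lemma lor_offset_self x n A : lor n n = -1 ->
  Rabs (lor (vsub x (vadd x (vscal A n))) (vsub x (vadd x (vscal A n)))) = A ^ 2.
Proof.
  intro Hn; rewrite vsub_vaddr, !lor_vscall, !lor_vscalr, Hn.
  replace (-1 * (A * (-1 * (A * -1)))) with (- A ^ 2) by ring.
  rewrite Rabs_Ropp; apply Rabs_pos_eq, pow2_ge_0.
Qed.

Lemma vderive_ext c x d d' : vderive c x d -> d = d' -> vderive c x d'.
Proof. intros H ->; exact H. Qed.

Lemma vderive_add f g x a c : vderive f x a -> vderive g x c ->
  vderive (fun y => vadd (f y) (g y)) x (vadd a c).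
Proof.
  intros (F1 & F2 & F3) (G1 & G2 & G3); split; [|split];
    [exact (is_derive_plus _ _ x _ _ F1 G1) | exact (is_derive_plus _ _ x _ _ F2 G2)
    |exact (is_derive_plus _ _ x _ _ F3 G3)].
Qed.

Lemma vderive_scal f x k a : vderive f x a -> vderive (fun y => vscal k (f y)) x (vscal k a).
Proof.
  intros (F1 & F2 & F3); split; [|split];
    [exact (is_derive_scal _ x k _ F1) | exact (is_derive_scal _ x k _ F2)
    |exact (is_derive_scal _ x k _ F3)].
Qed.

Lemma vderive_comp f g x a dg : vderive f (g x) a -> is_derive g x dg ->
  vderive (fun y => f (g y)) x (vscal dg a).
Proof.
  intros (H1 & H2 & H3) Hg; split; [|split];
    [apply (is_derive_comp (fun s => Defs.c1 (f s)))
    |apply (is_derive_comp (fun s => c2 (f s)))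
    |apply (is_derive_comp (fun s => c3 (f s)))]; assumption.
Qed.

Lemma vderive_comp_vscal f g x k w r : vderive f (g x) (vscal k w) -> is_derive g x r ->
  vderive (fun y => f (g y)) x (vscal (r * k) w).
Proof. intros Hf Hg; rewrite <- vscal_vscal; exact (vderive_comp f g x _ r Hf Hg). Qed.

Lemma is_derive_lor f g x a c : vderive f x a -> vderive g x c ->
  is_derive (fun y => lor (f y) (g y)) x (lor a (g x) + lor (f x) c).
Proof.
  intros (F1 & F2 & F3) (G1 & G2 & G3).
  pose proof (is_derive_mult _ _ x _ _ F1 G1 Rmult_comm) as P1.
  pose proof (is_derive_mult _ _ x _ _ F2 G2 Rmult_comm) as P2.
  pose proof (is_derive_mult _ _ x _ _ F3 G3 Rmult_comm) as P3.
  pose proof (is_derive_plus _ _ x _ _ (is_derive_plus _ _ x _ _ (is_derive_opp _ x _ P1) P2) P3)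
    as H.
  replace (lor a (g x) + lor (f x) c) with
    (plus (plus (opp (plus (mult (Defs.c1 a) (Defs.c1 (g x))) (mult (Defs.c1 (f x)) (Defs.c1 c))))
                (plus (mult (c2 a) (c2 (g x))) (mult (c2 (f x)) (c2 c))))
          (plus (mult (c3 a) (c3 (g x))) (mult (c3 (f x)) (c3 c))))
    by (unfold lor, plus, opp, mult; simpl; ring).
  revert H; apply is_derive_ext; intro y; unfold lor, plus, opp, mult; simpl; ring.
Qed.

Lemma lor_derive_const_norm c x d k :
  locally x (fun y => lor (c y) (c y) = k) -> vderive c x d -> lor (c x) d = 0.
Proof.
  intros Hk Hd.
  pose proof (is_derive_unique _ _ _ (is_derive_lor c c x d d Hd Hd)) as H1.
  assert (H0 : is_derive (fun y => lor (c y) (c y)) x 0).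
  { apply (is_derive_ext_loc (fun _ => k)); [|exact (is_derive_const k x)].
    revert Hk; apply filter_imp; intros y Hy; symmetry; exact Hy. }
  rewrite (is_derive_unique _ _ _ H0), lor_comm in H1; lra.
Qed.

Lemma locally_slice (D : R * R -> Prop) u v :
  open D -> D (u, v) -> locally v (fun y => D (u, y)).
Proof.
  intros HD Huv; destruct (HD _ Huv) as [eps Heps].
  exists eps; intros y Hy; apply Heps; split; [apply ball_center | exact Hy].
Qed.

Lemma sum_sq_pos (A B : R) : ~ (A = 0 /\ B = 0) -> 0 < A ^ 2 + B ^ 2.
Proof. intro HAB; destruct (Req_dec A 0); [assert (B <> 0) by tauto|]; nra. Qed.

Section BertrandMate.

Variables (D : R * R -> Prop) (sigma t n b : R -> R -> V3) (kappa tau : R -> R -> R).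
Hypothesis sigma_u : forall u v, D (u, v) -> du sigma u v (t u v).
Hypothesis t_u : forall u v, D (u, v) -> du t u v (vscal (- kappa u v) (n u v)).
Hypothesis n_u : forall u v, D (u, v) ->
  du n u v (vadd (vscal (- kappa u v) (t u v)) (vscal (- tau u v) (b u v))).
Hypothesis b_u : forall u v, D (u, v) -> du b u v (vscal (- tau u v) (n u v)).

Lemma du_frame_comb p q u v : D (u, v) ->
  du (fun u v => frame_comb p q (t u v) (b u v)) u v
     (vscal (- (p * kappa u v + q * tau u v)) (n u v)).
Proof.
  intro Huv; eapply vderive_ext.
  - apply vderive_add; apply vderive_scal; [apply t_u | apply b_u]; exact Huv.
  - apply V3_eq; simpl; ring.
Qed.

Lemma du_mate_curve A B u v : D (u, v) -> A * kappa u v + B * tau u v = 1 ->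
  du (fun u v => vadd (sigma u v) (vscal A (n u v))) u v
     (vscal (tau u v) (frame_comb B (- A) (t u v) (b u v))).
Proof.
  intros Huv Hbert; eapply vderive_ext.
  - apply vderive_add; [apply sigma_u | apply vderive_scal; apply n_u]; exact Huv.
  - apply V3_eq; simpl; rewrite <- (Rmult_1_l (_ (t u v))) at 1; rewrite <- Hbert; ring.
Qed.

Lemma dv_mate_curve_normal (A : R) (lam : R -> R -> R) u v dn :
  open D -> (forall u v, D (u, v) -> lorentz_frame (t u v) (n u v) (b u v)) -> D (u, v) ->
  dv sigma u v (vscal (lam u v) (b u v)) -> dv n u v dn ->
  exists d, dv (fun u v => vadd (sigma u v) (vscal A (n u v))) u v d /\ lor (n u v) d = 0.
Proof.
  intros HD frame Huv Hsigma_v Hn_v.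
  exists (vadd (vscal (lam u v) (b u v)) (vscal A dn)); split.
  - exact (vderive_add _ _ v _ _ Hsigma_v (vderive_scal _ v A _ Hn_v)).
  - assert (Hn_dn : lor (n u v) dn = 0).
    { apply (lor_derive_const_norm (fun y => n u y) v dn (-1)); [|exact Hn_v].
      generalize (locally_slice D u v HD Huv).
      apply filter_imp; intros y Hy; apply (frame u y Hy). }
    rewrite lor_vaddr, !lor_vscalr, Hn_dn; destruct (frame u v Huv) as (_&_&_&_&_&->); ring.
Qed.

End BertrandMate.

Theorem mainTheorem1
  (D : R * R -> Prop)
  (sigma t n b : R -> R -> V3) (lam kappa tau : R -> R -> R) (A B : R) :
  open D ->
  (* orthonormal frame {t,n,b}: t, b spacelike unit, n timelike unit *)
  (forall u v, D (u, v) ->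
     lor (t u v) (t u v) = 1 /\ lor (n u v) (n u v) = -1 /\
     lor (b u v) (b u v) = 1 /\ lor (t u v) (n u v) = 0 /\
     lor (t u v) (b u v) = 0 /\ lor (n u v) (b u v) = 0) ->
  (* sigma_u = t, sigma_v = lambda b, lambda nowhere zero *)
  (forall u v, D (u, v) -> du sigma u v (t u v)) ->
  (forall u v, D (u, v) -> dv sigma u v (vscal (lam u v) (b u v))) ->
  (forall u v, D (u, v) -> lam u v <> 0) ->
  (* Frenet-type equations along the u-curves *)
  (forall u v, D (u, v) -> du t u v (vscal (- kappa u v) (n u v))) ->
  (forall u v, D (u, v) ->
     du n u v (vadd (vscal (- kappa u v) (t u v)) (vscal (- tau u v) (b u v)))) ->
  (forall u v, D (u, v) -> du b u v (vscal (- tau u v) (n u v))) ->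
  (* smoothness in v of the frame fields *)
  (forall u v, D (u, v) -> exists d, dv t u v d) ->
  (forall u v, D (u, v) -> exists d, dv n u v d) ->
  (forall u v, D (u, v) -> exists d, dv b u v d) ->
  (* Bertrand-type condition *)
  ~ (A = 0 /\ B = 0) ->
  (forall u v, D (u, v) -> A * kappa u v + B * tau u v = 1) ->
  (forall u v, D (u, v) -> tau u v <> 0) ->
  let s := sqrt (A ^ 2 + B ^ 2) in
  let sigmas := fun u v => vadd (sigma u v) (vscal A (n u v)) in
  let ts := fun u v => vscal (/ s) (vadd (vscal B (t u v)) (vscal (- A) (b u v))) in
  let bs := fun u v => vscal (/ s) (vadd (vscal A (t u v)) (vscal B (b u v))) in
  let kappas := fun u v => (B * kappa u v - A * tau u v) / ((A ^ 2 + B ^ 2) * tau u v) in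
  let taus := fun u v => 1 / ((A ^ 2 + B ^ 2) * tau u v) in
  (* a parameter u* along the u-curve v = const, given as u = psi (u_star) on an
     open set I of u_star values: d u_star / du = s * tau: psi' = 1 / (s * tau) *)
  let is_ustar_param := fun (v : R) (I : R -> Prop) (psi : R -> R) =>
     open I /\ forall x, I x -> D (psi x, v) /\
       is_derive psi x (/ (s * tau (psi x) v)) in
  (* (1) *)
  (forall u v, D (u, v) ->
     du sigmas u v (vscal (tau u v) (vadd (vscal B (t u v)) (vscal (- A) (b u v))))) /\
  (forall v I psi, is_ustar_param v I psi -> forall x, I x ->
     vderive (fun y => sigmas (psi y) v) x (ts (psi x) v)) /\
  (forall u v, D (u, v) -> lor (ts u v) (ts u v) = 1) /\
  (forall u v, D (u, v) ->
     lor (n u v) (vscal (tau u v) (vadd (vscal B (t u v)) (vscal (- A) (b u v)))) = 0 /\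
     exists d, dv sigmas u v d /\ lor (n u v) d = 0) /\
  (* (2) *)
  (exists c, forall u v, D (u, v) ->
     sqrt (Rabs (lor (vsub (sigma u v) (sigmas u v)) (vsub (sigma u v) (sigmas u v)))) = c) /\
  (forall u v, D (u, v) ->
     lor (vsub (sigmas u v) (sigma u v)) (b u v) = 0 /\
     lor (vsub (sigmas u v) (sigma u v)) (bs u v) = 0 /\
     lor (b u v) (bs u v) = B / s) /\
  (* (3) *)
  (forall v I psi, is_ustar_param v I psi -> forall x, I x ->
     vderive (fun y => ts (psi y) v) x (vscal (- kappas (psi x) v) (n (psi x) v)) /\
     vderive (fun y => bs (psi y) v) x (vscal (- taus (psi x) v) (n (psi x) v))).
Proof.
  intros HD Hframe Hsu Hsv _ Htu Hnu Hbu _ Hdn _ HAB Hbert Htau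
    s sigmas ts bs kappas taus is_ustar_param.
  pose proof (sum_sq_pos A B HAB) as Hpos.
  assert (Hs2 : s * s = A ^ 2 + B ^ 2) by (apply sqrt_sqrt; lra).
  assert (Hs0 : s <> 0) by (intro Hs; rewrite Hs in Hs2; lra).
  assert (Hsigmas_u := du_mate_curve D sigma t n b kappa tau Hsu Hnu A B).
  assert (Hcomb_u := du_frame_comb D t n b kappa tau Htu Hbu).
  split; [intros u v Huv; exact (Hsigmas_u u v Huv (Hbert u v Huv))|].
  split.
  { intros v I psi [_ Hpsi] x Hx; destruct (Hpsi x Hx) as [Hxv Hd].
    eapply vderive_ext.
    - exact (vderive_comp_vscal _ _ x _ _ _ (Hsigmas_u _ _ Hxv (Hbert _ _ Hxv)) Hd).
    - apply vscal_ext; field; auto. }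
  split.
  { intros u v Huv; apply (lor_normalized_frame_comb _ (n u v));
      [exact (Hframe u v Huv) | lra | exact Hs0]. }
  split.
  { intros u v Huv; destruct (Hdn u v Huv) as [dn Hn_v]; split.
    - rewrite lor_vscalr; change (vadd _ _) with (frame_comb B (- A) (t u v) (b u v)).
      rewrite lor_normal_frame_comb by exact (Hframe u v Huv); ring.
    - exact (dv_mate_curve_normal D sigma t n b A lam u v dn HD Hframe Huv (Hsv u v Huv) Hn_v). }
  split.
  { exists (sqrt (A ^ 2)); intros u v Huv; f_equal.
    apply lor_offset_self; apply (Hframe u v Huv). }
  split.
  { intros u v Huv; unfold sigmas, bs; rewrite !vsub_vaddl, !lor_vscall, !lor_vscalr.
    change (vadd _ _) with (frame_comb A B (t u v) (b u v)).
    rewrite lor_normal_frame_comb, (lor_binormal_frame_comb _ (n u v)) by exact (Hframe u v Huv).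
    destruct (Hframe u v Huv) as (_&_&_&_&_&->).
    split; [|split]; [ring | ring | field; exact Hs0]. }
  intros v I psi [_ Hpsi] x Hx; destruct (Hpsi x Hx) as [Hxv Hd]; split.
  - eapply vderive_ext; [apply (vderive_comp_vscal (fun u => ts u v)); [|exact Hd]|].
    + rewrite <- vscal_vscal; exact (vderive_scal _ _ (/ s) _ (Hcomb_u B (- A) _ _ Hxv)).
    + apply vscal_ext; unfold kappas; rewrite <- Hs2; field; auto.
  - eapply vderive_ext; [apply (vderive_comp_vscal (fun u => bs u v)); [|exact Hd]|].
    + rewrite <- vscal_vscal; exact (vderive_scal _ _ (/ s) _ (Hcomb_u A B _ _ Hxv)).
    + rewrite Hbert by exact Hxv; apply vscal_ext; unfold taus; rewrite <- Hs2; field; auto.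
Qed.
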